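(* Consider the nonlinear program described in the context and the control-affine system $\dot x=-\nabla f(x)-\frac{\partial g}{\partial x}(x)^\top u-\frac{\partial h}{\partial x}(x)^\top v$ with inputs $(u,v)\in\mathcal{U}=\mathbb{R}^m_{\ge0}\times\mathbb{R}^k$. If MFCQ holds at every $x\in\mathcal{C}$, then there exists an open set $X$ containing $\mathcal{C}$ such that $\phi=(g,h):\mathbb{R}^n\to\mathbb{R}^{m+k}$ is an $(m,k)$-vector control barrier function of $\mathcal{C}$ on $X$ relative to $\mathcal{U}$ for this system.
   Context: Let $f:\mathbb{R}^n\to\mathbb{R}$, $g:\mathbb{R}^n\to\mathbb{R}^m$, $h:\mathbb{R}^n\to\mathbb{R}^k$ be continuously differentiable; program: minimize $f(x)$ subject to $g(x)\le0$, $h(x)=0$; feasible set $\mathcal{C}=\{x:g(x)\le0,h(x)=0\}$; $I_0(x)=\{i:g_i(x)=0\}$. MFCQ at $x$: $\{\nabla h_j(x)\}_{j=1}^k$ linearly independent and some $\xi$ has $\nabla h_j(x)^\top\xi=0$ for all $j$ and $\nabla g_i(x)^\top\xi<0$ for $i\in I_0(x)$. For a set $\mathcal{C}\subset X\subset\mathbb{R}^n$, a continuously differentiable $\phi:\mathbb{R}^n\to\mathbb{R}^{m+k}$ is an $(m,k)$-vector control barrier function of $\mathcal{C}$ on $X$ relative to $\mathcal{U}$ (for a control-affine system $\dot x=F_0(x)+\sum_\ell w_\ell F_\ell(x)$) if $\mathcal{C}=\{x:\phi_i(x)\le0,\ 1\le i\le m;\ \phi_j(x)=0,\ m<j\le m+k\}$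 and there exists $\alpha>0$ such that, for all $x\in X$, the set of $w\in\mathcal{U}$ with $\nabla\phi_i(x)^\top(F_0(x)+\sum_\ell w_\ell F_\ell(x))+\alpha\phi_i(x)\le0$ for $1\le i\le m$ and $\nabla\phi_j(x)^\top(F_0(x)+\sum_\ell w_\ell F_\ell(x))+\alpha\phi_j(x)=0$ for $m<j\le m+k$ is nonempty. For the system above, with $G=\frac{\partial g}{\partial x}(x)$, $H=\frac{\partial h}{\partial x}(x)$, this set is $K_\alpha(x)=\{(u,v)\in\mathbb{R}^m_{\ge0}\times\mathbb{R}^k: -GG^\top u-GH^\top v\le G\nabla f(x)-\alpha g(x),\ -HG^\top u-HH^\top v=H\nabla f(x)-\alpha h(x)\}$. *)

From HB Require Import structures.
From mathcomp Require Import all_boot all_order all_algebra.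
From mathcomp Require Import all_classical all_reals all_analysis.
Set Implicit Arguments. Unset Strict Implicit. Unset Printing Implicit Defensive.
Import Order.TTheory GRing.Theory Num.Theory.
Import numFieldNormedType.Exports.
Local Open Scope classical_set_scope.
Local Open Scope ring_scope.

Section Defs.
Variable R : realType.

Definition C1_scalar n (f : 'rV[R]_n -> R) (gradf : 'rV[R]_n -> 'rV[R]_n) :=
  (forall x, differentiable f x /\ forall v, 'd f x v = (v *m (gradf x)^T) 0 0)
  /\ continuous gradf.

(* g : R^n -> R^p is continuously differentiable; J x : 'M_(n,p) is the
   TRANSPOSED Jacobian, i.e. dg(x)v = v *m J x (so (dg/dx)(x) = (J x)^T,
   and column j of J x is the gradient of g_j at x); J is continuous. *)
Definition C1_vec n p (g : 'rV[R]_n -> 'rV[R]_p) (J : 'rV[R]_n -> 'M[R]_(n, p)) :=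
  (forall x, differentiable g x /\ forall v, 'd g x v = v *m J x)
  /\ continuous J.

Definition C1 n p (g : 'rV[R]_n -> 'rV[R]_p) := exists J, C1_vec g J.

Definition MFCQ n m k (g : 'rV[R]_n -> 'rV[R]_m) (h : 'rV[R]_n -> 'rV[R]_k)
    (Jg : 'rV[R]_n -> 'M[R]_(n, m)) (Jh : 'rV[R]_n -> 'M[R]_(n, k)) (x : 'rV[R]_n) :=
  (* the gradients of h_1..h_k (the rows of (dh/dx)(x)) are linearly independent *)
  row_free (Jh x)^T /\
  exists xi : 'rV[R]_n,
    (forall j : 'I_k, (xi *m Jh x) 0 j = 0) /\
    (forall i : 'I_m, g x 0 i = 0 -> (xi *m Jg x) 0 i < 0).

(* (m,k)-vector control barrier function of C on X relative to U for the
   control-affine system  xdot = F0 x + sum_l w_l F_l(x) = F0 x + w *m B x,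
   where F_l(x) is row l of B x. Components 1..m of phi are the indices
   lshift k i, components m+1..m+k are rshift m j. *)
Definition vector_cbf n m k q (phi : 'rV[R]_n -> 'rV[R]_(m + k))
    (C X : set 'rV[R]_n) (F0 : 'rV[R]_n -> 'rV[R]_n) (B : 'rV[R]_n -> 'M[R]_(q, n))
    (U : set 'rV[R]_q) :=
  C `<=` X /\
  C1 phi /\
  C = [set x | (forall i : 'I_m, phi x 0 (lshift k i) <= 0) /\
               (forall j : 'I_k, phi x 0 (rshift m j) = 0)] /\
  exists alpha : R, 0 < alpha /\
    forall x, X x -> exists w : 'rV[R]_q, U w /\
      (forall i : 'I_m,
         ('d phi x (F0 x + w *m B x)) 0 (lshift k i) + alpha * phi x 0 (lshift k i) <= 0) /\
      (forall j : 'I_k,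
         ('d phi x (F0 x + w *m B x)) 0 (rshift m j) + alpha * phi x 0 (rshift m j) = 0).

Definition input_set m k : set 'rV[R]_(m + k) :=
  [set w | forall i : 'I_m, 0 <= w 0 (lshift k i)].

End Defs.

From HB Require Import structures.
From mathcomp Require Import all_boot all_order all_algebra.
From mathcomp Require Import all_classical all_reals all_analysis.
From mathcomp Require Import lra.
Import Order.TTheory GRing.Theory Num.Theory.
Import numFieldNormedType.Exports.
Local Open Scope classical_set_scope.
Local Open Scope ring_scope.

(* Take alpha = 1 and let X be the interior of the set of points x at which the
   linearized constraints  g(x) + g'(x) d <= 0,  h(x) + h'(x) d = 0  have a
   solution d.

   C is contained in X: at x0 in C, MFCQ provides d0 = s xi solving the
   inequalities strictly, and since dh/dx(x0) has full rank, d0 can be corrected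
   continuously into an exact solution at every nearby point.

   On X the barrier condition holds: by Farkas' lemma, -grad f(x) - d splits as
   an element u dg/dx + v dh/dx (u >= 0) of the cone K spanned by the constraint
   gradients minus an element p of the dual cone of K.  The input (u, v) then
   drives the system along d - p, which still solves the linearized constraints,
   and these are exactly the barrier conditions with alpha = 1. *)

Section Farkas.
Context {R : realFieldType}.

Lemma row_mx_ge0 p1 p2 (u1 : 'rV[R]_p1) (u2 : 'rV[R]_p2) :
  (forall i, 0 <= row_mx u1 u2 0 i) <->
  (forall i, 0 <= u1 0 i) /\ (forall i, 0 <= u2 0 i).
Proof.
split=> [u0|[u10 u20] i].
  by split=> i; [move: (u0 (lshift p2 i)) | move: (u0 (rshift p1 i))];
    rewrite (row_mxEl, row_mxEr).
by case: (split_ordP i) => j ->; rewrite (row_mxEl, row_mxEr).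
Qed.

Lemma col_mx_ge0 p1 p2 (z1 : 'cV[R]_p1) (z2 : 'cV[R]_p2) :
  (forall i, 0 <= col_mx z1 z2 i 0) <->
  (forall i, 0 <= z1 i 0) /\ (forall i, 0 <= z2 i 0).
Proof.
split=> [z0|[z10 z20] i].
  by split=> i; [move: (z0 (lshift p2 i)) | move: (z0 (rshift p1 i))];
    rewrite (col_mxEu, col_mxEd).
by case: (split_ordP i) => j ->; rewrite (col_mxEu, col_mxEd).
Qed.

Lemma mulmx_tr_self_eq0 n (b : 'rV[R]_n) : (b *m b^T) 0 0 <= 0 -> b = 0.
Proof.
have sq_ge0 j : 0 <= b 0 j ^+ 2 by exact: sqr_ge0.
have -> : (b *m b^T) 0 0 = \sum_j b 0 j ^+ 2.
  by rewrite mxE; apply: eq_bigr => j _; rewrite mxE expr2.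
move=> le0; have sq0 : \sum_j b 0 j ^+ 2 = 0.
  by apply/eqP; rewrite eq_le le0 sumr_ge0.
apply/rowP => i; rewrite mxE; apply/eqP; rewrite -sqrf_eq0; apply/eqP.
exact: (psumr_eq0P _ sq0).
Qed.

Definition row_cone {p n} (A : 'M[R]_(p, n)) (b : 'rV[R]_n) :=
  exists2 u : 'rV[R]_p, (forall i, 0 <= u 0 i) & b = u *m A.

Lemma row_cone_mulmx_ge0 p n (A : 'M[R]_(p, n)) (b : 'rV[R]_n) (z : 'cV[R]_n) :
  row_cone A b -> (forall i, 0 <= (A *m z) i 0) -> 0 <= (b *m z) 0 0.
Proof.
case=> u u0 -> Az0; rewrite -mulmxA mxE.
by apply: sumr_ge0 => i _; apply: mulr_ge0.
Qed.

Definition cone_separated {p n} (A : 'M[R]_(p, n)) (b : 'rV[R]_n) :=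
  exists2 z : 'cV_n, (forall i, 0 <= (A *m z) i 0) & (b *m z) 0 0 < 0.

Lemma farkas_alternative_col_mx p n :
  (forall (A : 'M[R]_(p, n)) b, row_cone A b \/ cone_separated A b) ->
  forall (a : 'rV[R]_n) (A : 'M[R]_(p, n)) b,
    row_cone (col_mx a A) b \/ cone_separated (col_mx a A) b.
Proof.
move=> alt a A b; have [[u u0 ->]|[z1 Az1 bz1]] := alt A b.
  left; exists (row_mx 0 u); last by rewrite mul_row_col mul0mx add0r.
  by apply/row_mx_ge0; split=> // i; rewrite mxE.
set t := (a *m z1) 0 0; have [t_ge0|t_lt0] := leP 0 t.
  right; exists z1 => //; rewrite mul_col_mx; apply/col_mx_ge0; split=> //.
  by move=> i; rewrite ord1.
(* Up to the factor [- t], [P] projects along [a] onto the hyperplane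
   [x *m z1 = 0]; it kills [a], so the induction hypothesis applies to [A *m P]. *)
pose P := z1 *m a - t%:M.
have mulP x : x *m P = (x *m z1) 0 0 *: a - t *: x.
  rewrite mulmxBr mulmxA mul_mx_scalar.
  by rewrite {1}[x *m z1]mx11_scalar mul_scalar_mx.
have aP : a *m P = 0 by rewrite mulP subrr.
have [[u u0 bPE]|[z APz bPz]] := alt (A *m P) (b *m P); last first.
  right; exists (P *m z); last by rewrite mulmxA.
  rewrite mulmxA !mul_col_mx aP mul0mx; apply/col_mx_ge0.
  by split=> [i|]; rewrite ?mxE.
set c := b - u *m A.
have cz1 : (c *m z1) 0 0 < 0.
  rewrite mulmxBl mxE [X in _ + X]mxE subr_lt0 (lt_le_trans bz1) //.
  by apply: row_cone_mulmx_ge0 => //; exists u.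
have cE : c = ((c *m z1) 0 0 / t) *: a.
  have tc : t *: c = (c *m z1) 0 0 *: a.
    by apply/eqP; rewrite eq_sym -subr_eq0 -mulP mulmxBl bPE mulmxA subrr.
  have t0 : t != 0 by rewrite lt_eqF.
  by apply: (scalerI t0); rewrite tc scalerA mulrC divfK.
left; exists (row_mx ((c *m z1) 0 0 / t)%:M u).
  apply/row_mx_ge0; split=> // i; rewrite ord1 mxE eqxx mulr1n.
  by rewrite mulr_le0 ?invr_le0 ?ltW.
by rewrite mul_row_col mul_scalar_mx -cE subrK.
Qed.

Lemma farkas_alternative {p n} (A : 'M[R]_(p, n)) b :
  row_cone A b \/ cone_separated A b.
Proof.
elim: p A b => [|p IH] A b; last first.
  rewrite -[A](vsubmxK (A : 'M[R]_(1 + p, n))).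
  exact: farkas_alternative_col_mx.
have [->|b0] := eqVneq b 0; first by left; exists 0 => [[]//|]; rewrite mul0mx.
right; exists (- b^T) => [[]//|]; rewrite mulmxN mxE oppr_lt0 ltNge.
by apply/negP => /mulmx_tr_self_eq0; exact/eqP.
Qed.

Lemma farkas {p n} (A : 'M[R]_(p, n)) (b : 'rV[R]_n) :
  (forall z : 'cV_n, (forall i, 0 <= (A *m z) i 0) -> 0 <= (b *m z) 0 0) ->
  row_cone A b.
Proof.
move=> dual; have [//|[z Az bz]] := farkas_alternative A b.
by have := dual z Az; rewrite leNgt bz.
Qed.

Lemma farkas_mixed {p q n} (A : 'M[R]_(p, n)) (B : 'M[R]_(q, n)) (b : 'rV[R]_n) :
  (forall z : 'cV_n,
     (forall i, 0 <= (A *m z) i 0) -> B *m z = 0 -> 0 <= (b *m z) 0 0) ->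
  exists2 u : 'rV_p, (forall i, 0 <= u 0 i) & exists v : 'rV_q, b = u *m A + v *m B.
Proof.
move=> dual; have [c] : row_cone (col_mx A (col_mx B (- B))) b.
  apply: farkas => z; rewrite !mul_col_mx => /col_mx_ge0[Az /col_mx_ge0[Bz NBz]].
  apply: dual => //; apply/matrixP => i j; rewrite ord1 [RHS]mxE; apply/eqP.
  by rewrite eq_le Bz andbT; have := NBz i; rewrite mulNmx mxE oppr_ge0.
rewrite -[c]hsubmxK -[rsubmx c]hsubmxK => /row_mx_ge0[u0 _].
rewrite !mul_row_col mulmxN => ->; exists (lsubmx c) => //.
by exists (lsubmx (rsubmx c) - rsubmx (rsubmx c)); rewrite mulmxBl.
Qed.

End Farkas.

Section LinearizedConstraints.
Context {R : realFieldType}.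

Lemma cone_dual_cone_decomposition {n m k} (A : 'M[R]_(n, m)) (B : 'M[R]_(n, k))
    (z : 'rV[R]_n) :
  exists (u : 'rV_m) (v : 'rV_k) (p : 'rV_n),
    [/\ forall i, 0 <= u 0 i, forall i, 0 <= (p *m A) 0 i, p *m B = 0
      & z = u *m A^T + v *m B^T - p].
Proof.
(* Farkas in R^(m + k) for the unknowns [u >= 0], a slack [s >= 0] and a free [v]
   in  [u *m A^T *m J - row_mx s 0 + v *m B^T *m J = z *m J]. *)
pose J := row_mx A B.
have dual (w : 'cV_(m + k)) :
    (forall i, 0 <= (col_mx (A^T *m J) (- row_mx 1%:M 0) *m w) i 0) ->
    B^T *m J *m w = 0 -> 0 <= (z *m J *m w) 0 0.
  rewrite -[w]vsubmxK mul_col_mx mulNmx mul_row_col mul1mx mul0mx addr0.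
  move=> /col_mx_ge0[Aw w1_le0]; rewrite -!mulmxA.
  (* The certificate gives [zeta^T *m zeta <= 0] for [zeta := J *m w]. *)
  set zeta := J *m _ => Bzeta.
  suff -> : zeta = 0 by rewrite mulmx0 mxE.
  apply: trmx_inj; rewrite trmx0; apply: mulmx_tr_self_eq0; rewrite trmxK.
  rewrite {1}/zeta trmx_mul tr_col_mx tr_row_mx mul_row_col mulmxDl -!mulmxA.
  rewrite Bzeta mulmx0 addr0 mxE; apply: sumr_le0 => i _; rewrite mxE.
  apply: mulr_le0_ge0; first by have := w1_le0 i; rewrite !mxE oppr_ge0.
  by have := Aw i; rewrite mulmxA.
have [c c0 [v zJ]] := farkas_mixed _ _ _ dual.
move: c0 zJ; rewrite -[c]hsubmxK; set u := lsubmx c; set s := rsubmx c.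
move=> /row_mx_ge0[u0 s0].
rewrite mul_row_col mulmxN [s *m _]mul_mx_row mulmx1 mulmx0 => zJ.
exists u, v, (u *m A^T + v *m B^T - z).
have pJ : (u *m A^T + v *m B^T - z) *m J = row_mx s 0.
  by rewrite mulmxBl mulmxDl zJ !mulmxA; apply/eqP; rewrite subr_eq addrA subrKC.
have [pA pB] := eq_row_mx (etrans (esym (mul_mx_row _ A B)) pJ).
split=> //; first by move=> i; rewrite pA.
by rewrite opprB addrC subrK.
Qed.

Definition lin_feasible {n m k} (gv : 'rV[R]_m) (hv : 'rV[R]_k)
    (A : 'M[R]_(n, m)) (B : 'M[R]_(n, k)) :=
  exists d : 'rV[R]_n, (forall i, gv 0 i + (d *m A) 0 i <= 0) /\ hv + d *m B = 0.

Lemma lin_feasible_multipliers {n m k} {gv : 'rV[R]_m} {hv : 'rV[R]_k}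
    {A : 'M[R]_(n, m)} {B : 'M[R]_(n, k)} (gf : 'rV[R]_n) :
  lin_feasible gv hv A B ->
  exists2 u : 'rV_m, (forall i, 0 <= u 0 i) & exists v : 'rV_k,
    (forall i, ((- gf - (u *m A^T + v *m B^T)) *m A) 0 i + gv 0 i <= 0) /\
    (- gf - (u *m A^T + v *m B^T)) *m B + hv = 0.
Proof.
case=> d [gd hd].
have [u [v [p [u0 pA pB zE]]]] := cone_dual_cone_decomposition A B (- gf - d).
exists u => //; exists v.
have -> : - gf - (u *m A^T + v *m B^T) = d - p.
  have -> : u *m A^T + v *m B^T = - gf + (p - d).
    by rewrite -(subrK p (u *m A^T + _)) -zE -addrA [- d + p]addrC.
  by rewrite opprD opprK addKr opprB.
split=> [i|]; last by rewrite mulmxBl pB subr0 addrC.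
rewrite mulmxBl mxE [X in _ + X + _]mxE.
by have := gd i; have := pA i; lra.
Qed.

End LinearizedConstraints.

Section MatrixContinuity.
Context {R : realType} {T : topologicalType} {x0 : T}.

Lemma continuous_mxP {a b} (F : T -> 'M[R]_(a, b)) :
  {for x0, continuous F} <-> forall i j, {for x0, continuous (fun x => F x i j)}.
Proof.
split=> [cF i j|cF].
  exact: (continuous_comp (g := fun M : 'M[R]_(a, b) => M i j) cF
           (@coord_continuous R a b i j (F x0))).
apply/cvg_mx_entourageP => A entA.
apply: filter_forall => i; apply: filter_forall => j.
have /cvg_entourageP/(_ A entA) Aij := cF i j.
have {}Aij : nbhs x0 [set x | A (F x0 i j, F x i j)] := Aij.
by apply: filterS Aij => x; exact: mem_set.
Qed.

Lemma continuous_mulmx {a b c} {F : T -> 'M[R]_(a, b)} {G : T -> 'M[R]_(b, c)} :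
  {for x0, continuous F} -> {for x0, continuous G} ->
  {for x0, continuous (fun x => F x *m G x)}.
Proof.
move=> /continuous_mxP cF /continuous_mxP cG; apply/continuous_mxP => i j.
have -> : (fun x => (F x *m G x) i j) = fun x => \sum_l F x i l * G x l j.
  by apply/funext => x; rewrite mxE.
by apply: (cvg_big add_continuous) => // l _; exact: continuousM.
Qed.

Lemma continuous_det {a} {F : T -> 'M[R]_a} :
  {for x0, continuous F} -> {for x0, continuous (fun x => \det (F x))}.
Proof.
move=> /continuous_mxP cF; apply: (cvg_big add_continuous) => // s _.
apply: cvgM; first exact: cvg_cst.
by apply: (cvg_big mul_continuous) => // i _; exact: cF.
Qed.

Lemma continuous_adj {a} {F : T -> 'M[R]_a} :
  {for x0, continuous F} -> {for x0, continuous (fun x => \adj (F x))}.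
Proof.
move=> cF; apply/continuous_mxP => i j.
have -> : (fun x => \adj (F x) i j) =
    fun x => (-1) ^+ (j + i) * \det (row' j (col' i (F x))).
  by apply/funext => x; rewrite mxE.
apply: continuousM; first exact: cst_continuous.
apply: continuous_det; apply/continuous_mxP => p l.
have -> : (fun x => row' j (col' i (F x)) p l) = fun x => F x (lift j p) (lift i l).
  by apply/funext => x; rewrite !mxE.
by move/continuous_mxP: cF; apply.
Qed.

Lemma near_unitmx {a} {F : T -> 'M[R]_a} :
  {for x0, continuous F} -> F x0 \in unitmx -> \forall x \near x0, F x \in unitmx.
Proof.
move=> cF; rewrite unitmxE unitfE => det0.
have : \forall x \near x0, \det (F x) != 0 by apply: cvgr_neq0 (continuous_det cF) det0.
by apply: filterS => x; rewrite unitmxE unitfE.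
Qed.

Lemma continuous_invmx {a} {F : T -> 'M[R]_a} :
  {for x0, continuous F} -> F x0 \in unitmx ->
  {for x0, continuous (fun x => invmx (F x))}.
Proof.
move=> cF F0.
have invE x : F x \in unitmx -> invmx (F x) = (\det (F x))^-1 *: \adj (F x).
  by rewrite /invmx => ->.
apply: cvg_trans (near_eq_cvg (f := fun x => (\det (F x))^-1 *: \adj (F x)) _) _.
  by apply: filterS (near_unitmx cF F0) => x /invE.
have detV : {for x0, continuous (fun x => (\det (F x))^-1)}.
  by apply: continuousV; [rewrite -unitfE -unitmxE | exact: continuous_det].
by rewrite invE //; apply: cvgZ detV (continuous_adj cF).
Qed.

End MatrixContinuity.

Section LocalFeasibility.
Context {R : realType}.

Lemma exists_small_step {m} {gv a : 'rV[R]_m} :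
  (forall i, gv 0 i <= 0) -> (forall i, gv 0 i = 0 -> a 0 i < 0) ->
  exists2 s : R, 0 < s & forall i, gv 0 i + s * a 0 i < 0.
Proof.
move=> gv_le0 a_lt0.
have step i : \forall s \near 0^'+, gv 0 i + s * a 0 i < 0.
  have [gi_lt0|gi_ge0] := ltP (gv 0 i) 0.
    have lim_i : gv 0 i + s * a 0 i @[s --> 0^'+] --> gv 0 i + 0 * a 0 i.
      apply: cvg_at_right_filter; apply: cvgD; first exact: cvg_cst.
      by apply: cvgMl; exact: cvg_id.
    by rewrite mul0r addr0 in lim_i; exact: cvgr_lt lim_i _ gi_lt0.
  have gi0 : gv 0 i = 0 by apply/eqP; rewrite eq_le gv_le0.
  near=> s; rewrite gi0 add0r pmulr_rlt0; first exact: a_lt0.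
  by near: s; exact: nbhs_right_gt.
have [s [s_gt0 s_step]] :=
  filter_ex (filterI (nbhs_right_gt 0) (filter_forall _ step)).
by exists s.
Unshelve. all: by end_near.
Qed.

Lemma lin_feasible_near {T : topologicalType} {n m k} {g : T -> 'rV[R]_m}
    {h : T -> 'rV[R]_k} {Jg : T -> 'M[R]_(n, m)} {Jh : T -> 'M[R]_(n, k)}
    {x0 : T} (d0 : 'rV[R]_n) :
  {for x0, continuous g} -> {for x0, continuous h} ->
  {for x0, continuous Jg} -> {for x0, continuous Jh} ->
  row_free (Jh x0)^T ->
  (forall i, g x0 0 i + (d0 *m Jg x0) 0 i < 0) -> h x0 + d0 *m Jh x0 = 0 ->
  \forall x \near x0, lin_feasible (g x) (h x) (Jg x) (Jh x).
Proof.
move=> cg ch cJg cJh /row_freeP[E' E'J] gd0 hd0.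
pose E := E'^T; pose Q x := E *m Jh x.
have Q0 : Q x0 \in unitmx.
  by rewrite /Q /E -[Jh x0]trmxK -trmx_mul E'J trmx1 unitmx1.
have cQ : {for x0, continuous Q} by exact: continuous_mulmx (cvg_cst E) cJh.
(* [d x] corrects [d0] so as to solve the equality constraints at [x] exactly;
   [invmx (Q x)] is continuous near [x0] because [Q x0 = 1]. *)
pose d x := d0 - (h x + d0 *m Jh x) *m invmx (Q x) *m E.
have cd : {for x0, continuous d}.
  have cr : {for x0, continuous (fun x => h x + d0 *m Jh x)}.
    exact: cvgD ch (continuous_mulmx (cvg_cst d0) cJh).
  apply: cvgB (cvg_cst d0) _.
  exact: continuous_mulmx (continuous_mulmx cr (continuous_invmx cQ Q0)) (cvg_cst E).
have dx0 : d x0 = d0 by rewrite /d hd0 !mul0mx subr0.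
have strict : \forall x \near x0, forall i, g x 0 i + (d x *m Jg x) 0 i < 0.
  apply: filter_forall => i.
  have cV : {for x0, continuous (fun x => g x + d x *m Jg x)}.
    exact: cvgD cg (continuous_mulmx cd cJg).
  have : \forall x \near x0, (g x + d x *m Jg x) 0 i < 0.
    by apply: (cvgr_lt _ ((continuous_mxP _).1 cV 0 i)); rewrite mxE dx0.
  by apply: filterS => x; rewrite mxE.
apply: filterS2 strict (near_unitmx cQ Q0) => x gdx Qx.
exists (d x); split=> [i|]; first exact/ltW.
by rewrite mulmxBl -!mulmxA -/(Q x) mulVmx // mulmx1 addrA subrr.
Qed.

Lemma MFCQ_lin_feasible_near {n m k} {g : 'rV[R]_n -> 'rV[R]_m}
    {h : 'rV[R]_n -> 'rV[R]_k} {Jg : 'rV[R]_n -> 'M[R]_(n, m)}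
    {Jh : 'rV[R]_n -> 'M[R]_(n, k)} {x0 : 'rV[R]_n} :
  {for x0, continuous g} -> {for x0, continuous h} ->
  {for x0, continuous Jg} -> {for x0, continuous Jh} ->
  (forall i, g x0 0 i <= 0) -> (forall j, h x0 0 j = 0) -> MFCQ g h Jg Jh x0 ->
  \forall x \near x0, lin_feasible (g x) (h x) (Jg x) (Jh x).
Proof.
move=> cg ch cJg cJh g_le0 h0 [rf [xi [xi_h xi_g]]].
have [s s_gt0 gs] := exists_small_step g_le0 xi_g.
apply: (lin_feasible_near (s *: xi)) => // [i|].
  by rewrite -scalemxAl mxE; exact: gs.
by apply/rowP => j; rewrite -scalemxAl mxE [X in _ + X]mxE h0 xi_h mulr0 addr0 mxE.
Qed.

End LocalFeasibility.

Section RowMxDifferential.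
Context {R : realType}.

Lemma row_mx_mulmxE a b1 b2 (M1 : 'M[R]_(a, b1)) (M2 : 'M[R]_(a, b2)) :
  row_mx M1 M2 = M1 *m row_mx 1%:M 0 + M2 *m row_mx 0 1%:M.
Proof. by rewrite !mul_mx_row !mulmx1 !mulmx0 add_row_mx addr0 add0r. Qed.

Lemma is_diff_mulmxr {a b c} (A : 'M[R]_(b, c)) (M : 'M[R]_(a, b)) :
  is_diff M (mulmxr A) (mulmxr A).
Proof.
have cA : continuous (mulmxr A : 'M[R]_(a, b) -> _).
  move=> N; apply: (@continuous_mulmx R _ N _ _ _ id (fun=> A) cvg_id).
  exact: cst_continuous.
exact: DiffDef (linear_differentiable _ cA) (diff_lin _ cA).
Qed.

Lemma C1_vec_continuous {n p} {g : 'rV[R]_n -> 'rV[R]_p} {J} :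
  C1_vec g J -> continuous g /\ continuous J.
Proof. by case=> dg cJ; split=> // x; exact: differentiable_continuous (dg x).1. Qed.

Lemma C1_vec_row_mx {n m k} {g : 'rV[R]_n -> 'rV[R]_m} {h : 'rV[R]_n -> 'rV[R]_k}
    {Jg Jh} :
  C1_vec g Jg -> C1_vec h Jh ->
  C1_vec (fun x => row_mx (g x) (h x)) (fun x => row_mx (Jg x) (Jh x)).
Proof.
pose L : 'M[R]_(m, m + k) := row_mx 1%:M 0.
pose L' : 'M[R]_(k, m + k) := row_mx 0 1%:M.
have splitE p (M : 'M[R]_(p, m)) (M' : 'M[R]_(p, k)) :
  row_mx M M' = M *m L + M' *m L' by exact: row_mx_mulmxE.
move=> [dg cJg] [dh cJh]; split=> x; last first.
  have cL : {for x, continuous (fun y => Jg y *m L)}.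
    by apply: (continuous_mulmx (cJg x)); exact: cst_continuous.
  have cL' : {for x, continuous (fun y => Jh y *m L')}.
    by apply: (continuous_mulmx (cJh x)); exact: cst_continuous.
  by rewrite (_ : (fun y => _) = fun y => Jg y *m L + Jh y *m L');
    [exact: cvgD cL cL' | apply/funext => y; rewrite splitE].
have diff_of p (f : 'rV[R]_n -> 'rV[R]_p) J :
    differentiable f x /\ (forall v, 'd f x v = v *m J) -> is_diff x f (mulmxr J).
  by case=> df dfE; apply: DiffDef => //; apply/funext => v; rewrite dfE.
have [] := is_diffD (is_diff_comp (diff_of _ _ _ (dg x)) (is_diff_mulmxr L _))
                    (is_diff_comp (diff_of _ _ _ (dh x)) (is_diff_mulmxr L' _)).
rewrite (_ : _ + _ = fun y => row_mx (g y) (h y)); last first.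
  by apply/funext => y; rewrite splitE.
by move=> dgh dghE; split=> // v; rewrite dghE /= splitE mulmxDr !mulmxA.
Qed.

End RowMxDifferential.

Theorem mainTheorem9 (R : realType) (n m k : nat)
  (f : 'rV[R]_n -> R) (g : 'rV[R]_n -> 'rV[R]_m) (h : 'rV[R]_n -> 'rV[R]_k)
  (gradf : 'rV[R]_n -> 'rV[R]_n)
  (Jg : 'rV[R]_n -> 'M[R]_(n, m)) (Jh : 'rV[R]_n -> 'M[R]_(n, k)) :
  C1_scalar f gradf -> C1_vec g Jg -> C1_vec h Jh ->
  let C := [set x | (forall i : 'I_m, g x 0 i <= 0) /\ (forall j : 'I_k, h x 0 j = 0)] in
  (forall x, C x -> MFCQ g h Jg Jh x) ->
  exists X : set 'rV[R]_n, open X /\ C `<=` X /\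
    vector_cbf (fun x => row_mx (g x) (h x)) C X
      (fun x => - gradf x)
      (fun x => - (row_mx (Jg x) (Jh x))^T)
      (@input_set R m k).
Proof.
move=> _ Hg Hh C mfcq.
pose S := [set x | lin_feasible (g x) (h x) (Jg x) (Jh x)].
have [cg cJg] := C1_vec_continuous Hg; have [ch cJh] := C1_vec_continuous Hh.
have CS : C `<=` S°.
  move=> x Cx; have [g_le0 h0] := Cx.
  apply: MFCQ_lin_feasible_near g_le0 h0 (mfcq x Cx);
    [exact: cg | exact: ch | exact: cJg | exact: cJh].
have Hgh := C1_vec_row_mx Hg Hh.
exists S°; split; first exact: open_interior.
split=> //; split=> //; split; first by eexists; exact: Hgh.
split.
  apply/seteqP; split=> x [g_le0 h0]; split=> i.
  - by rewrite row_mxEl.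
  - by rewrite row_mxEr.
  - by have := g_le0 i; rewrite row_mxEl.
  - by have := h0 i; rewrite row_mxEr.
exists 1; split=> // x /interior_subset Sx.
have [u u0 [v [g_dir h_dir]]] := lin_feasible_multipliers (gradf x) Sx.
exists (row_mx u v); split; first by move=> i; rewrite row_mxEl.
rewrite (Hgh.1 x).2 mulmxN tr_row_mx mul_row_col mul_mx_row.
split=> i; rewrite mul1r ?row_mxEl ?row_mxEr; first exact: g_dir.
by have /rowP/(_ i) := h_dir; rewrite !mxE.
Qed.
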